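(* Let $Q$ be a quadrilateral in $K^2$. Two distinct bisectors of $Q$ share the same midpoint if and only if the vertices of $Q$ are the vertices of a parallelogram. In this case, the shared midpoint is the centroid of $Q$.
   Context: $K$ is a field of characteristic $\neq 2$; we work in $K^2$ inside the projective plane. A quadrilateral $Q=ABA'B'$ consists of four distinct lines $A,B,A',B'$ (sides), not all through one point, with adjacent sides ($A,B$; $B,A'$; $A',B'$; $B',A$) not parallel; opposite sides may be parallel. Vertices: $A\cap B$, $B\cap A'$, $A'\cap B'$, $B'\cap A$ (two may coincide if three sides are concurrent). The centroid is the midpoint of the midpoints of the diagonals (the lines through nonadjacent vertices), equivalently the average of the four vertices. A parallelogram is a quadrilateral whose pairs of opposite sides are parallel. A line $\ell$ crosses a pair $\{\ell_1,\ell_2\}$ if it is distinct from both and not parallel to both; $\mathrm{mid}_{\{\ell_1,\ell_2\}}(\ell)$ is the midpoint of the points where $\ell$ meets $\ell_1,\ell_2$ (the point at infinity of $\ell$ if one of them is at infinity). $\ell$ bisects $Q$ (is a bisector) if $\mathrm{mid}_{\mathsf P}(\ell)$ is the same for all pairs $\mathsf P$ among $\{A,A'\},\{B,B'\}$ that $\ell$ crosses; this common point is the midpoint of the bisector. *)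

From mathcomp Require Import all_boot all_algebra.
Set Implicit Arguments. Unset Strict Implicit. Unset Printing Implicit Defensive.
Import GRing.Theory.
Local Open Scope ring_scope.

Section Geometry.
Variable K : fieldType.

Definition point := (K * K)%type.

(* Directions of lines (= points at infinity): slope m, or vertical. *)
Inductive dir := DSlope of K | DVert.

(* A line in K^2, in canonical form: y = m x + c  (DSlope m)  or  x = c (DVert).
   This representation is bijective, so Leibniz equality = equality of lines. *)
Record line := Line { ldir : dir; lcst : K }.

Definition on (l : line) (p : point) : Prop :=
  match ldir l with
  | DSlope m => p.2 = m * p.1 + lcst l
  | DVert => p.1 = lcst l
  end.

(* Parallel = same direction (equal lines are parallel). *)
Definition parallel (l m : line) : Prop := ldir l = ldir m.

Inductive ppoint := Aff of point | Inf of dir.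

Definition midpt (p q : point) : point := ((p.1 + q.1) / 2, (p.2 + q.2) / 2).

(* X = mid_{l1,l2}(l): midpoint of l ∩ l1 and l ∩ l2, or the point at
   infinity of l if one of these intersections is at infinity. *)
Definition mid_is (l l1 l2 : line) (X : ppoint) : Prop :=
  ((parallel l l1 \/ parallel l l2) /\ X = Inf (ldir l)) \/
  (~ parallel l l1 /\ ~ parallel l l2 /\
   exists p q, [/\ on l p, on l1 p, on l q, on l2 q & X = Aff (midpt p q)]).

Definition crosses (l l1 l2 : line) : Prop :=
  [/\ l <> l1, l <> l2 & ~ (parallel l l1 /\ parallel l l2)].

(* A quadrilateral Q = A B A' B' (sides). *)
Record quad := Quad { qA : line; qB : line; qA' : line; qB' : line }.

Definition is_quad (Q : quad) : Prop :=
  let: Quad A B A' B' := Q in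
  [/\ [/\ A <> B, A <> A', A <> B', B <> A' & (B <> B' /\ A' <> B')],
      ~ (exists p, [/\ on A p, on B p, on A' p & on B' p]) &
      [/\ ~ parallel A B, ~ parallel B A', ~ parallel A' B' & ~ parallel B' A]].

Definition is_parallelogram (P : quad) : Prop :=
  is_quad P /\ parallel (qA P) (qA' P) /\ parallel (qB P) (qB' P).

Definition is_vertex (Q : quad) (x : point) : Prop :=
  let: Quad A B A' B' := Q in
  (on A x /\ on B x) \/ (on B x /\ on A' x) \/
  (on A' x /\ on B' x) \/ (on B' x /\ on A x).

Definition vertices_of_parallelogram (Q : quad) : Prop :=
  exists P, is_parallelogram P /\ forall x, is_vertex Q x <-> is_vertex P x.

Definition centroid (Q : quad) (c : point) : Prop :=
  let: Quad A B A' B' := Q in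
  exists v1 v2 v3 v4,
    [/\ on A v1 /\ on B v1, on B v2 /\ on A' v2, on A' v3 /\ on B' v3,
        on B' v4 /\ on A v4 & c = midpt (midpt v1 v3) (midpt v2 v4)].

Definition bisector_mid (Q : quad) (l : line) (X : ppoint) : Prop :=
  (crosses l (qA Q) (qA' Q) \/ crosses l (qB Q) (qB' Q)) /\
  (crosses l (qA Q) (qA' Q) -> mid_is l (qA Q) (qA' Q) X) /\
  (crosses l (qB Q) (qB' Q) -> mid_is l (qB Q) (qB' Q) X).

End Geometry.

(* Write a line as n . p = k.  A line l through M has M as the midpoint of its
   intersections with L1 and L2 iff
     (n1 . M - k1) (n2 . d) + (n2 . M - k2) (n1 . d) = 0
   for a direction vector d of l (this is mid_defect).  The left-hand side is linear in
   d, so if two distinct lines through M satisfy it, the vector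
   (n1 . M - k1) n2 + (n2 . M - k2) n1 vanishes: either M lies on both L1 and L2, or L1
   and L2 are parallel and M lies on their midline.  As the sides of Q are not
   concurrent, at least one pair of opposite sides is of the second kind, and in each
   case the point reflection in M pairs off the vertices of Q: they are the vertices of
   a parallelogram with centre M, which is then their centroid.  Conversely, the centre
   of a parallelogram with the same vertices pairs off the (necessarily distinct)
   vertices of Q in one of three ways, and each pairing exhibits two bisectors through
   the centre: the two midlines of Q, or a pair of opposite sides of Q. *)

From mathcomp Require Import all_boot all_algebra ring.
From Stdlib Require Import Classical.
Set Implicit Arguments. Unset Strict Implicit. Unset Printing Implicit Defensive.
Import GRing.Theory.
Local Open Scope ring_scope.

Lemma involution_matchings (T : eqType) (s : T -> T) (x1 x2 x3 x4 : T) :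
  involutive s -> uniq [:: x1; x2; x3; x4] ->
  {in [:: x1; x2; x3; x4], forall x, s x \in [:: x1; x2; x3; x4] /\ s x != x} ->
  [\/ s x1 = x3 /\ s x2 = x4, s x1 = x4 /\ s x2 = x3 | s x1 = x2 /\ s x4 = x3].
Proof.
move=> sK; rewrite /= !inE !negb_or -!andbA.
move=> /and4P[/eqP d12 /eqP d13 /eqP d14 /and4P[/eqP d23 /eqP d24 /eqP d34 _]] hs.
have /and4P[in1 in2 _ /andP[in4 _]] := allss [:: x1; x2; x3; x4].
have [m1 /eqP n1] := hs x1 in1; have [m2 /eqP n2] := hs x2 in2; have [m4 /eqP n4] := hs x4 in4.
have k1 := sK x1; have k2 := sK x2; have k3 := sK x3; have k4 := sK x4.
move: m1 m2 m4; rewrite !inE.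
by case/or4P => /eqP e1; case/or4P => /eqP e2; case/or4P => /eqP e4;
  first [by constructor 1 | by constructor 2 | by constructor 3 | exfalso; congruence].
Qed.

Section Plane.
Variable K : fieldType.
Hypothesis two_neq0 : (2 : K) != 0.
Local Notation point := (point K).
Local Notation line := (line K).
Local Notation quad := (quad K).
Local Notation par := (@parallel K).

(** * Lines in normal form *)

Definition nx (l : line) : K := if ldir l is DSlope m then - m else 1.
Definition ny (l : line) : K := if ldir l is DSlope _ then 1 else 0.
Definition leval (l : line) (p : point) : K := nx l * p.1 + ny l * p.2 - lcst l.
Definition ldet (l m : line) : K := nx l * ny m - ny l * nx m.

Lemma point_eq (p q : point) : p.1 = q.1 -> p.2 = q.2 -> p = q.
Proof. by case: p q => [a b] [c d] /= -> ->. Qed.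

Lemma onE (l : line) (p : point) : on l p <-> leval l p = 0.
Proof.
rewrite /on /leval /nx /ny; case: (ldir l) => [m|]; split => [->|/eqP].
- by ring.
- by rewrite subr_eq0 => /eqP <-; ring.
- by ring.
- by rewrite subr_eq0 => /eqP <-; ring.
Qed.

Lemma parallelE (l m : line) : par l m <-> ldet l m = 0.
Proof.
rewrite /parallel /ldet /nx /ny.
case: (ldir l) => [a|]; case: (ldir m) => [b|]; split => //.
- by case=> ->; ring.
- by move=> /eqP; rewrite mulr1 mul1r opprK addrC subr_eq0 => /eqP ->.
- by move=> /eqP; rewrite mulr0 mul1r sub0r oppr_eq0 oner_eq0.
- by move=> /eqP; rewrite mul1r mul0r subr0 oner_eq0.
- by move=> _; ring.
Qed.

Lemma par_sym (l m : line) : par l m -> par m l. Proof. by rewrite /parallel => ->. Qed.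
Lemma par_trans (l m k : line) : par l m -> par m k -> par l k.
Proof. by rewrite /parallel => ->. Qed.
Lemma npar_sym (l m : line) : ~ par l m -> ~ par m l. Proof. by move=> h /par_sym. Qed.
Lemma npar_neq (l m : line) : ~ par l m -> l <> m. Proof. by move=> h e; apply: h; rewrite e. Qed.

Lemma normal_par (l m : line) : par l m -> nx l = nx m /\ ny l = ny m.
Proof. by rewrite /parallel /nx /ny => ->. Qed.

Lemma normal_neq0 (l : line) (e : K) : e * nx l = 0 -> e * ny l = 0 -> e = 0.
Proof. by rewrite /nx /ny; case: (ldir l) => [m|] h1 h2; [move: h2|move: h1]; rewrite mulr1. Qed.

Lemma orth_normals_eq0 (l m : line) (u v : K) :
  nx l * u + ny l * v = 0 -> nx m * u + ny m * v = 0 -> ldet l m != 0 -> u = 0 /\ v = 0.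
Proof.
move=> hl hm hd.
have eu : ldet l m * u = ny m * (nx l * u + ny l * v) - ny l * (nx m * u + ny m * v).
  by rewrite /ldet; ring.
have ev : ldet l m * v = nx l * (nx m * u + ny m * v) - nx m * (nx l * u + ny l * v).
  by rewrite /ldet; ring.
rewrite hl hm !mulr0 subrr in eu ev.
move/eqP: eu ev; rewrite mulf_eq0 (negbTE hd) => /eqP -> /eqP.
by rewrite mulf_eq0 (negbTE hd) => /eqP.
Qed.

Lemma leval_sub (l : line) (p q : point) :
  leval l q - leval l p = nx l * (q.1 - p.1) + ny l * (q.2 - p.2).
Proof. by rewrite /leval; ring. Qed.

Lemma par_leval (l m : line) (p : point) : par l m -> leval m p = leval l p + (lcst l - lcst m).
Proof. by move=> /normal_par [e1 e2]; rewrite /leval e1 e2; ring. Qed.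

Lemma par_common (l m : line) (p : point) : par l m -> on l p -> on m p -> l = m.
Proof.
case: l m => [d k] [d' k'] /= hd /onE hl /onE; rewrite (par_leval _ hd) hl add0r.
by move: hd; rewrite /parallel /= => -> /eqP; rewrite subr_eq0 => /eqP ->.
Qed.

Lemma par_disjoint (l m : line) (p q : point) : par l m -> l <> m -> on l p -> on m q -> p != q.
Proof.
by move=> hp hne hl hm; apply/eqP => e; apply: hne; rewrite e in hl; apply: par_common hl hm.
Qed.

Lemma meet (l m : line) : ~ par l m -> exists p, on l p /\ on m p.
Proof.
move=> /parallelE /eqP hd.
exists ((lcst l * ny m - lcst m * ny l) / ldet l m, (nx l * lcst m - nx m * lcst l) / ldet l m).
by split; apply/onE; rewrite /leval /=; move: hd; rewrite /ldet => hd; field.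
Qed.

Lemma on_normal (l : line) (p q : point) :
  on l p -> on l q -> nx l * (q.1 - p.1) + ny l * (q.2 - p.2) = 0.
Proof. by move=> /onE hp /onE hq; rewrite -leval_sub hp hq subrr. Qed.

Lemma meet_uniq (l m : line) (p q : point) :
  l <> m -> on l p -> on m p -> on l q -> on m q -> p = q.
Proof.
move=> hne lp mp lq mq.
have [/parallelE hpar|hd] := eqVneq (ldet l m) 0; first by case: hne; exact: par_common hpar lp mp.
have [/eqP u0 /eqP v0] := orth_normals_eq0 (on_normal lq lp) (on_normal mq mp) hd.
by apply: point_eq; apply/eqP; rewrite -subr_eq0.
Qed.

(** * Point reflections and midlines *)

Definition psym (c p : point) : point := (2 * c.1 - p.1, 2 * c.2 - p.2).

Lemma psymK (c : point) : involutive (psym c).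
Proof. by move=> p; apply: point_eq; rewrite /psym /=; ring. Qed.

Lemma midpt_psym (c p : point) : midpt p (psym c p) = c.
Proof. by apply: point_eq; rewrite /midpt /psym /=; field. Qed.

Lemma psym_midpt (p q : point) : psym (midpt p q) p = q.
Proof. by apply: point_eq; rewrite /psym /midpt /=; field. Qed.

Lemma leval_psym (l : line) (c p : point) : leval l (psym c p) = 2 * leval l c - leval l p.
Proof. by rewrite /leval /psym /=; ring. Qed.

Lemma leval_midpt (l : line) (p q : point) : leval l (midpt p q) = (leval l p + leval l q) / 2.
Proof. by rewrite /leval /midpt /=; field. Qed.

Lemma psym_on (l : line) (c p : point) : on l c -> on l p -> on l (psym c p).
Proof. by move=> /onE hc /onE hp; apply/onE; rewrite leval_psym hc hp; ring. Qed.

Definition on_midline (L1 L2 : line) (c : point) : Prop :=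
  par L1 L2 /\ leval L1 c + leval L2 c = 0.

Lemma on_midline_sym (L1 L2 : line) (c : point) : on_midline L1 L2 c -> on_midline L2 L1 c.
Proof. by case=> /par_sym hp hs; split; rewrite // addrC. Qed.

Lemma midline_psym (L1 L2 : line) (c p : point) :
  on_midline L1 L2 c -> on L1 p -> on L2 (psym c p).
Proof.
case=> hp hs /onE h1; apply/onE.
rewrite leval_psym !(par_leval _ hp) h1; move: hs; rewrite (par_leval _ hp) => hs.
by rewrite -[RHS]hs; ring.
Qed.

Lemma midline_of_psym (L1 L2 : line) (c p : point) :
  par L1 L2 -> on L1 p -> on L2 (psym c p) -> on_midline L1 L2 c.
Proof.
move=> hp /onE h1 /onE; rewrite leval_psym !(par_leval _ hp) h1 => h2; split => //.
by rewrite (par_leval _ hp) -[RHS]h2; ring.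
Qed.

Lemma midline_off (L1 L2 : line) (c : point) : on_midline L1 L2 c -> L1 <> L2 -> ~ on L1 c.
Proof.
case=> hp hs hne /onE h1; apply: hne; apply: (par_common hp (proj2 (onE _ _) h1)).
by apply/onE; rewrite -[RHS]hs h1 add0r.
Qed.

Lemma par_psym (l m : line) (c p q : point) : p != q ->
  on l p -> on l q -> on m (psym c p) -> on m (psym c q) -> par l m.
Proof.
move=> hpq lp lq mp mq; apply/parallelE/eqP; apply: contra_neqT hpq => hd.
have hm : nx m * (q.1 - p.1) + ny m * (q.2 - p.2) = 0.
  by rewrite -[RHS](on_normal mq mp) /psym /=; ring.
have [/eqP u0 /eqP v0] := orth_normals_eq0 (on_normal lp lq) hm hd.
by apply: point_eq; apply/eqP; rewrite eq_sym -subr_eq0.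
Qed.

(** * Collinearity *)

Definition area (p q r : point) : K :=
  (q.1 - p.1) * (r.2 - p.2) - (q.2 - p.2) * (r.1 - p.1).

Lemma mul_diff_eq0 (p q : point) (e : K) : p != q ->
  e * (q.1 - p.1) = 0 -> e * (q.2 - p.2) = 0 -> e = 0.
Proof.
move=> hpq h1 h2; apply/eqP; apply: contra_neqT hpq => he.
move/eqP: h1; move/eqP: h2; rewrite !mulf_eq0 (negbTE he) /= !subr_eq0 => /eqP h2 /eqP h1.
exact: point_eq (esym h1) (esym h2).
Qed.

Lemma area_on (l : line) (p q r : point) : on l p -> on l q -> on l r -> area p q r = 0.
Proof.
move=> lp lq lr; have t0 := on_normal lp lq; have s0 := on_normal lp lr.
apply: (@normal_neq0 l).
- transitivity ((r.2 - p.2) * (nx l * (q.1 - p.1) + ny l * (q.2 - p.2))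
    - (nx l * (r.1 - p.1) + ny l * (r.2 - p.2)) * (q.2 - p.2)); first by rewrite /area; ring.
  by rewrite t0 s0; ring.
- transitivity ((nx l * (r.1 - p.1) + ny l * (r.2 - p.2)) * (q.1 - p.1)
    - (r.1 - p.1) * (nx l * (q.1 - p.1) + ny l * (q.2 - p.2))); first by rewrite /area; ring.
  by rewrite t0 s0; ring.
Qed.

Lemma on_area0 (l : line) (p q r : point) :
  p != q -> on l p -> on l q -> area p q r = 0 -> on l r.
Proof.
move=> hpq lp lq a0; have t0 := on_normal lp lq.
apply/onE; have -> : leval l r = nx l * (r.1 - p.1) + ny l * (r.2 - p.2).
  by rewrite -leval_sub (proj1 (onE _ _) lp) subr0.
apply: (mul_diff_eq0 hpq).
- transitivity ((r.1 - p.1) * (nx l * (q.1 - p.1) + ny l * (q.2 - p.2)) + ny l * area p q r).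
    by rewrite /area; ring.
  by rewrite t0 a0; ring.
- transitivity ((r.2 - p.2) * (nx l * (q.1 - p.1) + ny l * (q.2 - p.2)) - nx l * area p q r).
    by rewrite /area; ring.
  by rewrite t0 a0; ring.
Qed.

Lemma area_neq0_neq (p q r : point) : area p q r != 0 -> p != q.
Proof. by apply: contraNneq => ->; apply/eqP; rewrite /area; ring. Qed.

Lemma area_psym (a b c : point) : area a b (psym c a) = 2 * area a b c.
Proof. by rewrite /area /psym /=; ring. Qed.

Lemma neq_of_area (l m : line) (p q r : point) :
  on l p -> on l q -> on m r -> area p q r != 0 -> l <> m.
Proof. by move=> lp lq mr + e; rewrite -e in mr; rewrite (area_on lp lq mr) eqxx. Qed.

Lemma npar_of_area (l m : line) (p q r : point) :
  on l p -> on l q -> on m q -> on m r -> area p q r != 0 -> ~ par l m.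
Proof.
by move=> lp lq mq mr ha hp; apply: (neq_of_area lp lq mr ha); apply: par_common hp lq mq.
Qed.

Definition line_through (p q : point) : line :=
  if p.1 == q.1 then Line (DVert K) p.1
  else let m := (q.2 - p.2) / (q.1 - p.1) in Line (DSlope m) (p.2 - m * p.1).

Lemma line_through_l (p q : point) : on (line_through p q) p.
Proof. by rewrite /line_through; case: eqP => h; rewrite /on //=; ring. Qed.

Lemma line_through_r (p q : point) : on (line_through p q) q.
Proof.
rewrite /line_through; case: eqP => [->|/eqP h]; rewrite /on //=.
have hd : q.1 - p.1 != 0 by rewrite subr_eq0 eq_sym.
by field.
Qed.

Definition vertices (Q : quad) (v1 v2 v3 v4 : point) : Prop :=
  let: Quad A B A' B' := Q in
  [/\ on A v1 /\ on B v1, on B v2 /\ on A' v2, on A' v3 /\ on B' v3 & on B' v4 /\ on A v4].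

Lemma vertices_exist (Q : quad) : is_quad Q -> exists v1 v2 v3 v4, vertices Q v1 v2 v3 v4.
Proof.
case: Q => A B A' B' [_ _ [pAB pBA' pA'B' pB'A]].
have [v1 ?] := meet pAB; have [v2 ?] := meet pBA'.
have [v3 ?] := meet pA'B'; have [v4 ?] := meet pB'A.
by exists v1, v2, v3, v4.
Qed.

Lemma is_vertexE (Q : quad) (v1 v2 v3 v4 x : point) : is_quad Q ->
  vertices Q v1 v2 v3 v4 -> is_vertex Q x <-> x \in [:: v1; v2; v3; v4].
Proof.
case: Q => A B A' B' [_ _ [/npar_neq nAB /npar_neq nBA' /npar_neq nA'B' /npar_neq nB'A]].
case=> [[a1 b1] [b2 a2] [a3 b3] [b4 a4]]; rewrite !inE; split.
- case=> [[a b]|[[b a]|[[a b]|[b a]]]].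
  + by rewrite (meet_uniq nAB a b a1 b1) eqxx.
  + by rewrite (meet_uniq nBA' b a b2 a2) eqxx orbT.
  + by rewrite (meet_uniq nA'B' a b a3 b3) eqxx !orbT.
  + by rewrite (meet_uniq nB'A b a b4 a4) eqxx !orbT.
- by case/or4P => /eqP ->; rewrite /is_vertex; tauto.
Qed.

Definition transpose_quad (Q : quad) : quad := let: Quad A B A' B' := Q in Quad B A B' A'.

Lemma is_quad_transpose (Q : quad) : is_quad Q -> is_quad (transpose_quad Q).
Proof.
case: Q => A B A' B' [[nAB nAA' nAB' nBA' [nBB' nA'B']] hc [pAB pBA' pA'B' pB'A]].
split.
- by split; [exact: nesym nAB| | | |split; [|exact: nesym nA'B']].
- by case=> p [? ? ? ?]; apply: hc; exists p.
- by split; apply: npar_sym.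
Qed.

Lemma vertices_transpose (Q : quad) (v1 v2 v3 v4 : point) :
  vertices Q v1 v2 v3 v4 -> vertices (transpose_quad Q) v1 v4 v3 v2.
Proof. by case: Q => A B A' B' [[? ?] [? ?] [? ?] [? ?]]. Qed.

Lemma bisector_mid_transpose (Q : quad) (l : line) (X : ppoint K) :
  bisector_mid (transpose_quad Q) l X -> bisector_mid Q l X.
Proof. by case: Q => A B A' B' [hc [hB hA]]; split; [case: hc; [right|left]|]. Qed.

Definition pgram (c a b a' b' : point) : Prop := psym c a = a' /\ psym c b = b'.

Lemma pgram_parallelogram (c a b a' b' : point) : pgram c a b a' b' -> area a b c != 0 ->
  exists P, is_parallelogram P /\ vertices P a b a' b'.
Proof.
case=> <- <- habc.
have area2 x y z : area x y z = 2 * area a b c -> area x y z != 0.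
  by move=> ->; rewrite mulf_neq0.
have h1 : area (psym c b) a b != 0 by apply: area2; rewrite /area /psym /=; ring.
have h2 : area (psym c b) a (psym c a) != 0 by apply: area2; rewrite /area /psym /=; ring.
have h3 : area a b (psym c a) != 0 by rewrite area_psym mulf_neq0.
have h4 : area b (psym c a) (psym c b) != 0 by apply: area2; rewrite /area /psym /=; ring.
have h5 : area (psym c a) (psym c b) a != 0 by apply: area2; rewrite /area /psym /=; ring.
pose A := line_through (psym c b) a; pose B := line_through a b.
pose A' := line_through b (psym c a); pose B' := line_through (psym c a) (psym c b).
have [Ab' Aa] : on A (psym c b) /\ on A a by split; [exact: line_through_l|exact: line_through_r].
have [Ba Bb] : on B a /\ on B b by split; [exact: line_through_l|exact: line_through_r].
have [A'b A'a'] : on A' b /\ on A' (psym c a).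
  by split; [exact: line_through_l|exact: line_through_r].
have [B'a' B'b'] : on B' (psym c a) /\ on B' (psym c b).
  by split; [exact: line_through_l|exact: line_through_r].
have nAA' := neq_of_area Ab' Aa A'a' h2.
have pA : par A A'.
  by apply: (par_psym (c := c) (area_neq0_neq h1) Ab' Aa); rewrite ?psymK.
have pB : par B B' := par_psym (area_neq0_neq h3) Ba Bb B'a' B'b'.
exists (Quad A B A' B'); split; last by split; split.
split; last by split.
split.
- split; [exact: neq_of_area Ab' Aa Bb h1|exact: nAA'|exact: neq_of_area Ab' Aa B'a' h2|
    exact: neq_of_area Ba Bb A'a' h3|split; [exact: neq_of_area Ba Bb B'a' h3|]].
  exact: neq_of_area A'b A'a' B'b' h4.
- by case=> p [Ap _ A'p _]; apply: (negP (par_disjoint pA nAA' Ap A'p)).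
- split; [exact: npar_of_area Ab' Aa Ba Bb h1|exact: npar_of_area Ba Bb A'b A'a' h3|
    exact: npar_of_area A'b A'a' B'a' B'b' h4|exact: npar_of_area B'a' B'b' Ab' Aa h5].
Qed.

(** * Midpoints of bisectors *)

Lemma crosses_npar (l L1 L2 : line) : ~ par l L1 -> ~ par l L2 -> crosses l L1 L2.
Proof. by move=> h1 h2; split; [exact: npar_neq|exact: npar_neq|case]. Qed.

Lemma mid_is_midpt (l L1 L2 : line) (p q : point) : ~ par l L1 -> ~ par l L2 ->
  on l p -> on L1 p -> on l q -> on L2 q -> mid_is l L1 L2 (Aff (midpt p q)).
Proof. by move=> h1 h2 lp hp lq hq; right; split; [|split; [|exists p, q]]. Qed.

Lemma mid_is_aff (l L1 L2 N1 N2 : line) (X : ppoint K) :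
  ~ par L1 N1 -> ~ par L1 N2 -> ~ par L2 N1 -> ~ par L2 N2 ->
  mid_is l L1 L2 X -> (crosses l N1 N2 -> mid_is l N1 N2 X) -> exists M, X = Aff M.
Proof.
move=> p11 p12 p21 p22 [[hpar ->]|[_ [_ [p [q [_ _ _ _ ->]]]]]] hN; last by exists (midpt p q).
have [n1 n2] : ~ par l N1 /\ ~ par l N2.
  by case: hpar => h; split => /(par_trans (par_sym h)).
by case: (hN (crosses_npar n1 n2)) => [[[]]|[_ [_ [p [q [_ _ _ _]]]]]].
Qed.

Definition mid_defect (L1 L2 : line) (M : point) (l : line) : K :=
  leval L1 M * ldet L2 l + leval L2 M * ldet L1 l.

Lemma mid_is_defect (l L1 L2 : line) (M : point) :
  mid_is l L1 L2 (Aff M) -> on l M /\ mid_defect L1 L2 M l = 0.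
Proof.
case=> [[_ //]|[_ [_ [p [q [/onE lp /onE hp /onE lq /onE hq [->]]]]]]]; split.
  by apply/onE; rewrite leval_midpt lp lq addr0 mul0r.
transitivity (leval L1 p * ldet L2 l + leval L2 q * ldet L1 l
  - (leval l q - leval l p) * ldet L1 L2 / 2).
  by rewrite /mid_defect /leval /ldet /midpt /=; field.
by rewrite hp hq lp lq; ring.
Qed.

Lemma mid_defect_eq0 (l L1 L2 : line) (M : point) :
  (crosses l L1 L2 -> mid_is l L1 L2 (Aff M)) -> on l M -> mid_defect L1 L2 M l = 0.
Proof.
move=> hmid /onE hM; have [/hmid/mid_is_defect[]//|hc] := classic (crosses l L1 L2).
rewrite /mid_defect; have [<-|n1] := classic (l = L1); first by rewrite hM /ldet; ring.
have [<-|n2] := classic (l = L2); first by rewrite hM /ldet; ring.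
have [[/par_sym/parallelE -> /par_sym/parallelE ->]|np] := classic (par l L1 /\ par l L2).
  by ring.
by case: hc.
Qed.

Lemma bisector_mid_aff (Q : quad) (l : line) (X : ppoint K) :
  is_quad Q -> bisector_mid Q l X -> exists M, X = Aff M.
Proof.
case: Q => A B A' B' [_ _ [pAB pBA' pA'B' pB'A]] [[hc|hc] [hA hB]] /=.
- by apply: (mid_is_aff _ _ _ _ (hA hc) hB) => //; apply: npar_sym.
- by apply: (mid_is_aff _ _ _ _ (hB hc) hA) => //; apply: npar_sym.
Qed.

Lemma bisector_mid_defect (Q : quad) (l : line) (M : point) : bisector_mid Q l (Aff M) ->
  [/\ on l M, mid_defect (qA Q) (qA' Q) M l = 0 & mid_defect (qB Q) (qB' Q) M l = 0].
Proof.
case=> hc [hA hB]; have hM : on l M.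
  by case: hc => [/hA|/hB] /mid_is_defect [].
by split => //; apply: mid_defect_eq0.
Qed.

Lemma mid_defect_dichotomy (L1 L2 : line) (M : point) (l1 l2 : line) :
  mid_defect L1 L2 M l1 = 0 -> mid_defect L1 L2 M l2 = 0 -> ~ par l1 l2 ->
  (on L1 M /\ on L2 M) \/ on_midline L1 L2 M.
Proof.
move=> d1 d2 /parallelE/eqP h12.
set e1 := leval L1 M; set e2 := leval L2 M.
set u := - (e1 * ny L2 + e2 * ny L1); set v := e1 * nx L2 + e2 * nx L1.
have defectE l : mid_defect L1 L2 M l = nx l * u + ny l * v.
  by rewrite /mid_defect /ldet /u /v /e1 /e2; ring.
rewrite !defectE in d1 d2; have [u0 v0] := orth_normals_eq0 d1 d2 h12.
have [/parallelE hpar|hd] := eqVneq (ldet L1 L2) 0.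
  have [ex ey] := normal_par hpar; right; split => //; apply: (@normal_neq0 L1).
  - by rewrite -[RHS]v0 /v /e1 /e2 ex; ring.
  - by move/eqP: u0; rewrite oppr_eq0 /e1 /e2 ey => /eqP <-; ring.
have e1d : e1 * ldet L1 L2 = ny L1 * (- v) - nx L1 * u by rewrite /ldet /u /v; ring.
have e2d : e2 * ldet L1 L2 = ny L2 * v + nx L2 * u by rewrite /ldet /u /v; ring.
rewrite u0 v0 oppr0 !mulr0 subrr in e1d; rewrite u0 v0 !mulr0 addr0 in e2d.
left; split; apply/onE.
- by move/eqP: e1d; rewrite mulf_eq0 (negbTE hd) orbF => /eqP.
- by move/eqP: e2d; rewrite mulf_eq0 (negbTE hd) orbF => /eqP.
Qed.

(** * Two bisectors with a common midpoint *)

(* The reflection in c exchanges the opposite vertices (v1 v3, v2 v4), the ends of A and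
   of A' (v1 v4, v2 v3), or the ends of B and of B' (v1 v2, v4 v3); the area condition
   excludes flat configurations. *)
Definition centered_vertices (c v1 v2 v3 v4 : point) : Prop :=
  [\/ pgram c v1 v2 v3 v4 /\ area v1 v2 c != 0,
      pgram c v1 v2 v4 v3 /\ area v1 v2 c != 0
    | pgram c v1 v4 v2 v3 /\ area v1 v4 c != 0].

Lemma meet_midline_pgram (A B A' B' : line) (v1 v2 v3 v4 M : point) :
  is_quad (Quad A B A' B') -> vertices (Quad A B A' B') v1 v2 v3 v4 ->
  on A M -> on A' M -> on_midline B B' M -> pgram M v1 v2 v4 v3 /\ area v1 v2 M != 0.
Proof.
case=> [[_ nAA' nAB' _ [nBB' nA'B']] _ _] [[a1 b1] [b2 a2] [a3 b3] [b4 a4]] hA hA' hB.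
have offB := midline_off hB nBB'.
split; first split.
- exact: meet_uniq nAB' (psym_on hA a1) (midline_psym hB b1) a4 b4.
- exact: meet_uniq nA'B' (psym_on hA' a2) (midline_psym hB b2) a3 b3.
- have n12 : v1 != v2.
    by apply/eqP => e; apply: offB; rewrite -(meet_uniq nAA' a1 _ hA hA') // e.
  by apply/eqP => /(on_area0 n12 b1 b2).
Qed.

Lemma midlines_pgram (A B A' B' : line) (v1 v2 v3 v4 M : point) :
  is_quad (Quad A B A' B') -> vertices (Quad A B A' B') v1 v2 v3 v4 ->
  on_midline A A' M -> on_midline B B' M -> pgram M v1 v2 v3 v4 /\ area v1 v2 M != 0.
Proof.
case=> [[_ nAA' nAB' _ [nBB' nA'B']] _ _] [[a1 b1] [b2 a2] [a3 b3] [b4 a4]] hA hB.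
split; first split.
- exact: meet_uniq nA'B' (midline_psym hA a1) (midline_psym hB b1) a3 b3.
- exact: meet_uniq (nesym nAB') (midline_psym hB b2) (midline_psym (on_midline_sym hA) a2) b4 a4.
- apply/eqP => /(on_area0 (par_disjoint hA.1 nAA' a1 a2) b1 b2).
  exact: midline_off hB nBB'.
Qed.

Lemma bisectors_centered (Q : quad) (v1 v2 v3 v4 : point) (l1 l2 : line) (X : ppoint K) :
  is_quad Q -> vertices Q v1 v2 v3 v4 -> l1 <> l2 ->
  bisector_mid Q l1 X -> bisector_mid Q l2 X ->
  exists M, X = Aff M /\ centered_vertices M v1 v2 v3 v4.
Proof.
move=> hQ hv hne b1 b2; have [M eX] := bisector_mid_aff hQ b1; subst X.
exists M; split => //.
have [on1 dA1 dB1] := bisector_mid_defect b1.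
have [on2 dA2 dB2] := bisector_mid_defect b2.
have n12 : ~ par l1 l2 by move=> hp; apply: hne; apply: par_common hp on1 on2.
case: Q hQ hv b1 b2 dA1 dA2 dB1 dB2 => A B A' B' hQ hv _ _ /= dA1 dA2 dB1 dB2.
case: (mid_defect_dichotomy dA1 dA2 n12) => [[hA hA']|mA];
  case: (mid_defect_dichotomy dB1 dB2 n12) => [[hB hB']|mB].
- by case: hQ => _ hconc _; exfalso; apply: hconc; exists M.
- by constructor 2; exact: meet_midline_pgram hQ hv hA hA' mB.
- constructor 3.
  exact: meet_midline_pgram (is_quad_transpose hQ) (vertices_transpose hv) hB hB' mA.
- by constructor 1; exact: midlines_pgram hQ hv mA mB.
Qed.

Lemma centered_parallelogram (Q : quad) (v1 v2 v3 v4 c : point) :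
  is_quad Q -> vertices Q v1 v2 v3 v4 -> centered_vertices c v1 v2 v3 v4 ->
  vertices_of_parallelogram Q.
Proof.
move=> hQ hv.
have relabel a b a' b' : perm_eq [:: a; b; a'; b'] [:: v1; v2; v3; v4] ->
    pgram c a b a' b' -> area a b c != 0 -> vertices_of_parallelogram Q.
  move=> hperm hp ha; have [P [hP hPv]] := pgram_parallelogram hp ha.
  by exists P; split => // x; rewrite (is_vertexE _ hQ hv) (is_vertexE _ hP.1 hPv) (perm_mem hperm).
case=> [[hp ha]|[hp ha]|[hp ha]]; apply: relabel hp ha => //.
- by rewrite !perm_cons (perm_catC [:: v4] [:: v3]).
- by rewrite perm_cons (perm_catC [:: v4] [:: v2; v3]).
Qed.

Lemma centroid_of_centered (Q : quad) (v1 v2 v3 v4 c : point) :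
  vertices Q v1 v2 v3 v4 -> centered_vertices c v1 v2 v3 v4 -> centroid Q c.
Proof.
case: Q => A B A' B' [h1 h2 h3 h4] hc; exists v1, v2, v3, v4; split => //.
case: hc => [[[<- <-] _]|[[<- <-] _]|[[<- <-] _]];
  by apply: point_eq; rewrite /midpt /psym /=; field.
Qed.

(** * Bisectors of a quadrilateral with the vertices of a parallelogram *)

Lemma parallelogram_pgram (P : quad) (w1 w2 w3 w4 : point) :
  is_parallelogram P -> vertices P w1 w2 w3 w4 -> pgram (midpt w1 w3) w1 w2 w3 w4.
Proof.
case: P => A B A' B' [[_ _ [_ _ _ /npar_neq nB'A]] [pA pB]] [[a1 b1] [b2 a2] [a3 b3] [b4 a4]].
set c := midpt w1 w3; have e13 : psym c w1 = w3 := psym_midpt w1 w3.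
have e31 : psym c w3 = w1 by rewrite -e13 psymK.
have mB : on_midline B B' c by apply: (midline_of_psym pB b1); rewrite e13.
have mA : on_midline A' A c by apply: (midline_of_psym (par_sym pA) a3); rewrite e31.
by split => //; apply: meet_uniq nB'A (midline_psym mB b2) (midline_psym mA a2) b4 a4.
Qed.

Lemma parallelogram_uniq (P : quad) (w1 w2 w3 w4 : point) :
  is_parallelogram P -> vertices P w1 w2 w3 w4 -> uniq [:: w1; w2; w3; w4].
Proof.
case: P => A B A' B' [[[_ nAA' _ _ [nBB' _]] _ _] [pA pB]] [[a1 b1] [b2 a2] [a3 b3] [b4 a4]].
rewrite /= !inE !negb_or (par_disjoint pA nAA' a1 a2) (par_disjoint pA nAA' a1 a3).
rewrite (par_disjoint pB nBB' b1 b4) (par_disjoint pB nBB' b2 b3).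
have [pA' nA'A] := (par_sym pA, nesym nAA').
by rewrite (par_disjoint pA' nA'A a2 a4) (par_disjoint pA' nA'A a3 a4).
Qed.

Lemma quad_vertices_noncollinear (Q : quad) (v1 v2 v3 v4 : point) :
  is_quad Q -> vertices Q v1 v2 v3 v4 -> uniq [:: v1; v2; v3; v4] ->
  area v1 v2 v3 != 0 /\ area v1 v2 v4 != 0.
Proof.
case: Q => A B A' B' [[nAB _ _ nBA' _] _ _] [[a1 b1] [b2 a2] [a3 b3] [b4 a4]].
rewrite /= !inE !negb_or -!andbA => /and4P[d12 _ /eqP d14 /and4P[/eqP d23 _ _ _]].
split; apply/eqP => /(on_area0 d12 b1 b2) => hB.
- exact: d23 (meet_uniq nBA' b2 a2 hB a3).
- exact: d14 (meet_uniq (nesym nAB) b1 a1 hB a4).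
Qed.

Lemma pgram_psym_mem (c w1 w2 w3 w4 : point) : pgram c w1 w2 w3 w4 ->
  uniq [:: w1; w2; w3; w4] ->
  {in [:: w1; w2; w3; w4], forall x, psym c x \in [:: w1; w2; w3; w4] /\ psym c x != x}.
Proof.
case=> e13 e24; have e31 : psym c w3 = w1 by rewrite -e13 psymK.
have e42 : psym c w4 = w2 by rewrite -e24 psymK.
rewrite /= !inE !negb_or -!andbA => /and4P[d12 d13 d14 /and4P[d23 d24 d34 _]] x.
rewrite !inE => /or4P[] /eqP ->; rewrite ?e13 ?e24 ?e31 ?e42 !eqxx ?orbT.
all: by split => //; rewrite eq_sym.
Qed.

Lemma parallelogram_centered (Q : quad) (v1 v2 v3 v4 : point) :
  is_quad Q -> vertices Q v1 v2 v3 v4 -> vertices_of_parallelogram Q ->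
  exists c, centered_vertices c v1 v2 v3 v4.
Proof.
move=> hQ hv [P [hP hPQ]]; have [w1 [w2 [w3 [w4 hw]]]] := vertices_exist hP.1.
have hpw := parallelogram_pgram hP hw; have uw := parallelogram_uniq hP hw.
have memVW x : x \in [:: v1; v2; v3; v4] <-> x \in [:: w1; w2; w3; w4].
  by rewrite -(is_vertexE _ hQ hv) -(is_vertexE _ hP.1 hw).
have uv : uniq [:: v1; v2; v3; v4] by apply: leq_size_uniq uw _ _ => // x /memVW.
set c := midpt w1 w3.
have hs : {in [:: v1; v2; v3; v4], forall x, psym c x \in [:: v1; v2; v3; v4] /\ psym c x != x}.
  by move=> x /memVW /(pgram_psym_mem hpw uw) [/memVW].
have [nc12 nc14] := quad_vertices_noncollinear hQ hv uv.
exists c; case: (involution_matchings (psymK c) uv hs) => [[e1 e2]|[e1 e2]|[e1 e2]].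
- by constructor 1; split; last by move: nc12; rewrite -e1 area_psym mulf_eq0 negb_or => /andP[].
- by constructor 2; split; last by move: nc14; rewrite -e1 area_psym mulf_eq0 negb_or => /andP[].
- constructor 3; split => //.
  have : area v1 v4 v2 != 0.
    by rewrite (_ : area v1 v4 v2 = - area v1 v2 v4) ?oppr_eq0 // /area; ring.
  by rewrite -e1 area_psym mulf_eq0 negb_or => /andP[].
Qed.

Definition par_through (l : line) (c : point) : line := Line (ldir l) (lcst l + leval l c).

Lemma on_par_through (l : line) (c : point) : on (par_through l c) c.
Proof. by apply/onE; rewrite (@par_leval l) //=; ring. Qed.

Lemma mid_is_center (l L1 L2 : line) (c : point) : ~ par l L1 -> ~ par l L2 ->
  on l c -> on_midline L1 L2 c -> mid_is l L1 L2 (Aff c).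
Proof.
move=> h1 h2 lc hc; have [p [lp hp]] := meet h1; rewrite -(midpt_psym c p).
exact: mid_is_midpt h1 h2 lp hp (psym_on lc lp) (midline_psym hc hp).
Qed.

Lemma midline_bisector (A B A' B' : line) (c : point) : par A A' -> ~ par A B -> ~ par A B' ->
  on_midline B B' c -> bisector_mid (Quad A B A' B') (par_through A c) (Aff c).
Proof.
move=> pA pB pB' hc; split; first by right; apply: crosses_npar.
split; first by case=> _ _ [].
by move=> _; apply: mid_is_center => //; exact: on_par_through.
Qed.

Lemma side_bisector (A B A' B' l : line) (p q : point) : l = A \/ l = A' ->
  ~ par l B -> ~ par l B' -> on l p -> on B p -> on l q -> on B' q ->
  bisector_mid (Quad A B A' B') l (Aff (midpt p q)).
Proof.
move=> hl h1 h2 lp hp lq hq; split; first by right; apply: crosses_npar.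
by split; [case; case: hl | move=> _; apply: mid_is_midpt].
Qed.

Lemma opposite_pairs_bisectors (Q : quad) (v1 v2 v3 v4 c : point) :
  is_quad Q -> vertices Q v1 v2 v3 v4 -> pgram c v1 v2 v3 v4 -> area v1 v2 c != 0 ->
  exists l1 l2 X, [/\ l1 <> l2, bisector_mid Q l1 X & bisector_mid Q l2 X].
Proof.
case: Q => A B A' B' [_ _ [pAB pBA' _ pB'A]] [[a1 b1] [b2 a2] [a3 b3] [b4 a4]] [e13 e24] hc.
have n12 := area_neq0_neq hc.
have n14 : v1 != v4.
  by rewrite -e24; apply: contraNneq hc => ->; apply/eqP; rewrite /area /psym /=; ring.
have pA : par A A' by apply: (par_psym (c := c) n14 a1 a4); rewrite ?e13 -?e24 ?psymK.
have pB : par B B' by apply: (par_psym (c := c) n12 b1 b2); rewrite ?e13 ?e24.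
have mA : on_midline A A' c by apply: (midline_of_psym pA a1); rewrite e13.
have mB : on_midline B B' c by apply: (midline_of_psym pB b1); rewrite e13.
exists (par_through A c), (par_through B c), (Aff c); split.
- by apply: npar_neq; exact: pAB.
- exact: midline_bisector pA pAB (npar_sym pB'A) mB.
- apply: (bisector_mid_transpose (Q := Quad A B A' B')).
  exact: midline_bisector pB (npar_sym pAB) pBA' mA.
Qed.

Lemma side_pairs_bisectors (Q : quad) (v1 v2 v3 v4 c : point) :
  is_quad Q -> vertices Q v1 v2 v3 v4 -> pgram c v1 v2 v4 v3 ->
  exists l1 l2 X, [/\ l1 <> l2, bisector_mid Q l1 X & bisector_mid Q l2 X].
Proof.
case: Q => A B A' B' [[_ nAA' _ _ _] _ [pAB pBA' pA'B' pB'A]] [[a1 b1] [b2 a2] [a3 b3] [b4 a4]].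
case=> e14 e23; exists A, A', (Aff c); split => //.
- rewrite -(midpt_psym c v1) e14.
  exact: side_bisector (or_introl erefl) pAB (npar_sym pB'A) a1 b1 a4 b4.
- rewrite -(midpt_psym c v2) e23.
  exact: side_bisector (or_intror erefl) (npar_sym pBA') pA'B' a2 b2 a3 b3.
Qed.

Lemma centered_bisectors (Q : quad) (v1 v2 v3 v4 c : point) :
  is_quad Q -> vertices Q v1 v2 v3 v4 -> centered_vertices c v1 v2 v3 v4 ->
  exists l1 l2 X, [/\ l1 <> l2, bisector_mid Q l1 X & bisector_mid Q l2 X].
Proof.
move=> hQ hv [[hp hc]|[hp _]|[hp _]].
- exact: opposite_pairs_bisectors hQ hv hp hc.
- exact: side_pairs_bisectors hQ hv hp.
- have [l1 [l2 [X [hne b1 b2]]]] :=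
    side_pairs_bisectors (is_quad_transpose hQ) (vertices_transpose hv) hp.
  by exists l1, l2, X; split; try apply: bisector_mid_transpose.
Qed.

End Plane.

Unset Implicit Arguments.

Theorem proposition3p5 (K : fieldType) (char2 : (2 : K) != 0)
    (Q : quad K) (hQ : is_quad Q) :
  ((exists (l1 l2 : line K) (X : ppoint K),
       [/\ l1 <> l2, bisector_mid Q l1 X & bisector_mid Q l2 X])
     <-> vertices_of_parallelogram Q) /\
  (forall (l1 l2 : line K) (X : ppoint K),
     l1 <> l2 -> bisector_mid Q l1 X -> bisector_mid Q l2 X ->
     exists c, centroid Q c /\ X = Aff c).
Proof.
have [v1 [v2 [v3 [v4 hv]]]] := vertices_exist hQ.
split; first split.
- move=> [l1 [l2 [X [hne b1 b2]]]].
  have [M [_ hM]] := bisectors_centered char2 hQ hv hne b1 b2.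
  exact: (centered_parallelogram char2 hQ hv hM).
- move=> /(parallelogram_centered char2 hQ hv) [c hc].
  exact: (centered_bisectors char2 hQ hv hc).
- move=> l1 l2 X hne b1 b2.
  have [M [-> hM]] := bisectors_centered char2 hQ hv hne b1 b2.
  by exists M; split => //; exact: (centroid_of_centered char2 hv hM).
Qed.
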